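(* Let $\tilde\nu$ be a probability measure on $\mathcal{C}_n$. Then there exists a product measure $\xi$ on $\mathcal{C}_n$ such that $$\mathrm{W}_1(\tilde\nu,\xi)\le\sqrt{n\,\mathrm{Tr}(\mathcal{H}(\tilde\nu))}.$$ Moreover, one may take $\xi$ to be the unique product measure whose center of mass lies at the point $\int_{\mathcal{C}_n}g_{\tilde\nu}(y)\,d\tilde\nu(y)$, which is equal to the center of mass of $\tilde\nu$.
   Context: $\mathcal{C}_n=\{-1,1\}^n$ with uniform probability measure $\mu$. For a probability measure $\nu$ on $\mathcal{C}_n$ with $f=\log\frac{d\nu}{d\mu}$, and $y\in\mathcal{C}_n$, $i\in[n]$, let $y_\pm$ agree with $y$ except the $i$-th coordinate equals $\pm1$; define $g_\nu(y)\in\mathbb{R}^n$ by $\langle g_\nu(y),e_i\rangle=\frac{e^{f(y_+)}-e^{f(y_-)}}{e^{f(y_+)}+e^{f(y_-)}}$ (taken to be $0$ if $\nu(y_+)=\nu(y_-)=0$). Define the matrix $\mathcal{H}(\nu)=\int g_\nu(y)^{\otimes2}d\nu(y)-\left(\int g_\nu(y)\,d\nu(y)\right)^{\otimes2}$, the covariance matrix of $g_\nu(X)$, $X\sim\nu$. $\mathrm{W}_1$ is the Wasserstein distance with respect to Hamming distance; a product measure is the law of a vector with independent coordinates. *)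

From mathcomp Require Import all_boot all_order all_algebra.
From mathcomp Require Import classical_sets reals.
Set Implicit Arguments. Unset Strict Implicit. Unset Printing Implicit Defensive.
Import Order.TTheory GRing.Theory Num.Theory.
Local Open Scope ring_scope.

(* The discrete cube C_n = {-1,1}^n, a point is encoded by its sign pattern
   (true <-> +1, false <-> -1). *)
Definition cube (n : nat) := {ffun 'I_n -> bool}.

Section Cube.
Variables (R : realType) (n : nat).

Definition spin (x : cube n) (i : 'I_n) : R := if x i then 1 else -1.

Definition is_prob (nu : {ffun cube n -> R}) : Prop :=
  (forall x, 0 <= nu x) /\ \sum_(x : cube n) nu x = 1.

Definition setc (y : cube n) (i : 'I_n) (b : bool) : cube n :=
  [ffun j => if j == i then b else y j].

(* g_nu(y)_i = (e^{f(y+)} - e^{f(y-)}) / (e^{f(y+)} + e^{f(y-)}), f = log dnu/dmu.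
   Since mu is uniform, e^{f(z)} = 2^n nu(z) and the factor 2^n cancels;
   the value is 0 when nu(y+) = nu(y-) = 0. *)
Definition gvec (nu : {ffun cube n -> R}) (y : cube n) (i : 'I_n) : R :=
  let a := nu (setc y i true) in let b := nu (setc y i false) in
  if a + b == 0 then 0 else (a - b) / (a + b).

Definition integ (nu : {ffun cube n -> R}) (h : cube n -> R) : R :=
  \sum_(x : cube n) nu x * h x.

Definition Hmx (nu : {ffun cube n -> R}) : 'M[R]_n :=
  \matrix_(i, j) (integ nu (fun y => gvec nu y i * gvec nu y j)
                  - integ nu (fun y => gvec nu y i) * integ nu (fun y => gvec nu y j)).

Definition center (nu : {ffun cube n -> R}) : 'I_n -> R :=
  fun i => integ nu (fun x => spin x i).

Definition marg (nu : {ffun cube n -> R}) (i : 'I_n) (b : bool) : R :=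
  \sum_(x : cube n | x i == b) nu x.

Definition is_product (nu : {ffun cube n -> R}) : Prop :=
  is_prob nu /\ forall x : cube n, nu x = \prod_(i < n) marg nu i (x i).

Definition hamming (x y : cube n) : R := #|[set i | x i != y i]|%:R.

Definition is_coupling (nu1 nu2 : {ffun cube n -> R})
    (pi : {ffun cube n * cube n -> R}) : Prop :=
  (forall z, 0 <= pi z) /\
  (forall x, \sum_(y : cube n) pi (x, y) = nu1 x) /\
  (forall y, \sum_(x : cube n) pi (x, y) = nu2 y).

Definition W1 (nu1 nu2 : {ffun cube n -> R}) : R :=
  inf [set c : R | exists pi, is_coupling nu1 nu2 pi /\
        c = \sum_(z : cube n * cube n) pi z * hamming z.1 z.2].

End Cube.

(* Let m be the mean of g = g_nu and p_i = (1 + m_i) / 2.  Couple X ~ nu with Y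
   sequentially: given X, draw each Y_i independently by the optimal coupling of the
   conditional law of X_i given X_0, ..., X_(i-1) with Bernoulli(p_i).  Summing out X one
   coordinate at a time shows that Y has the product law xi with mean m.  Since g_i(X) is
   the conditional expectation of the i-th spin given the other coordinates, the same
   holds given X_0, ..., X_(i-1), so P(X_i <> Y_i) <= E|g_i(X) - m_i| / 2.  Cauchy-Schwarz
   then gives W1(nu, xi) <= sum_i E|g_i - m_i| <= sqrt (n sum_i Var g_i) = sqrt (n Tr H). *)

From mathcomp Require Import all_boot all_order all_algebra.
From mathcomp Require Import classical_sets reals.
From mathcomp Require Import ring lra zify.
Set Implicit Arguments. Unset Strict Implicit. Unset Printing Implicit Defensive.
Import Order.TTheory GRing.Theory Num.Theory.
Local Open Scope ring_scope.

Section WeightedSums.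
Variables (R : realFieldType) (T : finType).

Lemma sqr_wsum_le (w f : T -> R) : (forall x, 0 <= w x) ->
  (\sum_x w x * f x) ^+ 2 <= (\sum_x w x) * \sum_x w x * f x ^+ 2.
Proof.
move=> w_ge0; set S0 := \sum_x w x; set S1 := \sum_x w x * f x.
set S2 := \sum_x w x * f x ^+ 2.
have spread_ge0 : 0 <= \sum_x \sum_y w x * w y * (f x - f y) ^+ 2.
  by do 2![apply: sumr_ge0 => ? _]; rewrite mulr_ge0 ?sqr_ge0 ?mulr_ge0.
have spreadE : \sum_x \sum_y w x * w y * (f x - f y) ^+ 2 = 2 * (S0 * S2 - S1 ^+ 2).
  transitivity (\sum_x (w x * S2 + S0 * (w x * f x ^+ 2) - 2 * (w x * f x) * S1)).
    apply: eq_bigr => x _.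
    transitivity (\sum_y (w x * (w y * f y ^+ 2) + w y * (w x * f x ^+ 2)
                         - 2 * (w x * f x) * (w y * f y))).
      by apply: eq_bigr => y _; ring.
    by rewrite sumrB big_split /= -mulr_sumr -mulr_suml -mulr_sumr.
  rewrite sumrB big_split /= -mulr_suml -mulr_sumr -mulr_suml -mulr_sumr -/S0 -/S1 -/S2.
  ring.
rewrite spreadE in spread_ge0; lra.
Qed.

Lemma sqr_mean_abs_dev_le (w f : T -> R) : (forall x, 0 <= w x) -> \sum_x w x = 1 ->
  (\sum_x w x * `|f x - \sum_y w y * f y|) ^+ 2 <=
  \sum_x w x * f x ^+ 2 - (\sum_x w x * f x) ^+ 2.
Proof.
move=> w_ge0 w_sum1; set m := \sum_y w y * f y.
apply: le_trans (sqr_wsum_le (fun x => `|f x - m|) w_ge0) _; rewrite w_sum1 mul1r.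
have -> : \sum_x w x * `|f x - m| ^+ 2 =
    \sum_x (w x * f x ^+ 2 - 2 * m * (w x * f x) + m ^+ 2 * w x).
  by apply: eq_bigr => x _; rewrite real_normK ?num_real //; ring.
rewrite big_split sumrB /= -!mulr_sumr w_sum1 -/m; lra.
Qed.

End WeightedSums.

Lemma sum_le_sqrt (R : rcfType) (n : nat) (e : 'I_n -> R) :
  \sum_i e i <= Num.sqrt (n%:R * \sum_i e i ^+ 2).
Proof.
apply: le_trans (ler_norm _) _; rewrite -sqrtr_sqr ler_wsqrtr //.
have mul1_sum (F : 'I_n -> R) : \sum_i 1 * F i = \sum_i F i.
  by apply: eq_bigr => i _; rewrite mul1r.
by have := sqr_wsum_le e (fun=> ler01); rewrite !mul1_sum sumr_const card_ord.
Qed.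

Section Classes.
Variables (R : realFieldType) (T : finType) (K : eqType) (w : T -> R) (k : T -> K).
Hypothesis w_ge0 : forall x, 0 <= w x.

Lemma sum_by_classes (h : T -> R) :
  \sum_x w x * h x =
  \sum_x w x * ((\sum_(z | k z == k x) w z * h z) / \sum_(z | k z == k x) w z).
Proof.
pose mass x := \sum_(z | k z == k x) w z.
transitivity (\sum_z \sum_(x | k x == k z) w x * (w z * h z) / mass z).
  apply: eq_bigr => z _; rewrite -!mulr_suml -/(mass z).
  have [mass0|mass_neq0] := eqVneq (mass z) 0; last by rewrite mulrAC divff ?mul1r.
  have : w z <= mass z by rewrite /mass (bigD1 z) //= lerDl sumr_ge0.
  rewrite mass0 => wz_le0; have -> : w z = 0 by apply/le_anti; rewrite wz_le0 w_ge0.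
  by rewrite !mul0r.
rewrite (exchange_big_dep xpredT) //=; apply: eq_bigr => x _.
rewrite -/(mass x) mulr_suml mulr_sumr; apply: eq_big => [z|z /eqP kxz].
  by rewrite eq_sym.
by rewrite -mulrA /mass kxz.
Qed.

Lemma ler_sum_by_classes (h1 h2 : T -> R) :
  (forall x, \sum_(z | k z == k x) w z * h1 z <= \sum_(z | k z == k x) w z * h2 z) ->
  \sum_x w x * h1 x <= \sum_x w x * h2 x.
Proof.
move=> le_class; rewrite sum_by_classes [leRHS]sum_by_classes.
apply: ler_sum => x _; apply: ler_wpM2l => //.
by apply: ler_wpM2r; rewrite ?invr_ge0 ?sumr_ge0.
Qed.

Lemma eq_sum_by_classes (h1 h2 : T -> R) :
  (forall x, \sum_(z | k z == k x) w z * h1 z = \sum_(z | k z == k x) w z * h2 z) ->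
  \sum_x w x * h1 x = \sum_x w x * h2 x.
Proof.
by move=> eq_class; apply/le_anti; rewrite !ler_sum_by_classes // => x; rewrite eq_class.
Qed.

End Classes.

Section BitCoupling.
Variable R : realFieldType.

Definition bernoulli (p : R) (b : bool) : R := if b then p else 1 - p.

Lemma bernoulli_sum p : bernoulli p true + bernoulli p false = 1.
Proof. by rewrite /bernoulli addrC subrK. Qed.

Lemma bernoulli_ge0 p b : 0 <= p <= 1 -> 0 <= bernoulli p b.
Proof. by case/andP; case: b => //= _; rewrite subr_ge0. Qed.

Lemma mulr_div_le (x y : R) : 0 <= x <= y -> y * (x / y) = x.
Proof.
case/andP=> x_ge0 x_le_y; have [y0|y_neq0] := eqVneq y 0; last by rewrite mulrC divfK.
by rewrite y0 mul0r; apply/le_anti; rewrite x_ge0 -y0 x_le_y.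
Qed.

(* The optimal coupling of the bit law (A, B) / (A + B) with [bernoulli p], as a
   transition kernel from c: only the excess mass |A - p (A + B)| changes sides. *)
Definition bit_kernel (A B p : R) (c : bool) : bool -> R :=
  let t := p * (A + B) in
  bernoulli (if t <= A then (if c then t / A else 0) else (if c then 1 else (t - A) / B)).

Variables (A B p : R).
Hypotheses (A_ge0 : 0 <= A) (B_ge0 : 0 <= B) (p_ge0 : 0 <= p) (p_le1 : p <= 1).

Let t_bounds : 0 <= p * (A + B) <= A + B.
Proof. by rewrite mulr_ge0 ?addr_ge0 //= ler_piMl ?addr_ge0. Qed.

Lemma bit_kernel_ge0 c b : 0 <= bit_kernel A B p c b.
Proof.
have /andP[t_ge0 t_le] := t_bounds.
apply: bernoulli_ge0; have [tA|At] := lerP (p * (A + B)) A; case: c; rewrite ?lexx ?ler01 //.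
- rewrite divr_ge0 //=; have [->|A_neq0] := eqVneq A 0; first by rewrite invr0 mulr0.
  by rewrite ler_pdivrMr ?mul1r // lt_def A_neq0.
- have B_gt0 : 0 < B by lra.
  by rewrite divr_ge0 ?subr_ge0 ?(ltW At) //= ler_pdivrMr // mul1r; lra.
Qed.

Lemma bit_kernel_sum c : bit_kernel A B p c true + bit_kernel A B p c false = 1.
Proof. exact: bernoulli_sum. Qed.

Lemma bit_kernel_mix b :
  A * bit_kernel A B p true b + B * bit_kernel A B p false b = (A + B) * bernoulli p b.
Proof.
have /andP[t_ge0 t_le] := t_bounds.
rewrite /bit_kernel /bernoulli; have [tA|At] := lerP (p * (A + B)) A.
  by case: b; rewrite ?mulrBr ?mulr1 mulr_div_le ?t_ge0 //; lra.
have B_gt0 : 0 < B by lra.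
by case: b; rewrite ?mulrBr ?mulr1 mulr_div_le ?subr_ge0 ?(ltW At) //; lra.
Qed.

Lemma bit_kernel_cost :
  A * bit_kernel A B p true false + B * bit_kernel A B p false true = `|A - p * (A + B)|.
Proof.
have /andP[t_ge0 t_le] := t_bounds.
rewrite /bit_kernel /bernoulli; have [tA|At] := lerP (p * (A + B)) A.
  by rewrite mulrBr mulr1 mulr_div_le ?t_ge0 //; lra.
have B_gt0 : 0 < B by lra.
by rewrite mulr_div_le ?subr_ge0 ?(ltW At) //; lra.
Qed.

End BitCoupling.

Section CubeSums.
Variable n : nat.
Implicit Types (y z : cube n) (i : 'I_n).

Lemma setc_at z i b : setc z i b i = b.
Proof. by rewrite ffunE eqxx. Qed.

Lemma setc_setc z i b c : setc (setc z i b) i c = setc z i c.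
Proof. by apply/ffunP => j; rewrite !ffunE; case: (j == i). Qed.

Lemma setc_id z i : setc z i (z i) = z.
Proof. by apply/ffunP => j; rewrite !ffunE; case: eqP => [->|]. Qed.

Lemma sum_cube_pairs (V : nmodType) (h : cube n -> V) i :
  \sum_(z : cube n) h z =
  \sum_(z : cube n) (if z i then h (setc z i true) + h (setc z i false) else 0).
Proof.
pose flip z := setc z i (~~ z i).
have flipK : involutive flip by move=> z; rewrite /flip setc_setc setc_at negbK setc_id.
rewrite (bigID (fun z : cube n => z i)) /= [X in _ + X](reindex_inj (inv_inj flipK)) /=.
rewrite [X in _ + X](eq_bigl (fun z : cube n => z i)) => [|z]; last first.
  by rewrite /flip setc_at negbK.
rewrite -big_mkcond -big_split /=; apply: eq_bigr => z zi.
rewrite /flip zi; congr (h _ + _); apply/ffunP => j.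
by rewrite ffunE; case: eqP => // ->.
Qed.

Lemma sum_cube_prod (R : comPzSemiRingType) (F : 'I_n -> bool -> R) :
  \sum_(y : cube n) \prod_i F i (y i) = \prod_i (F i true + F i false).
Proof. by rewrite -bigA_distr_bigA; apply: eq_bigr => i _; rewrite big_bool. Qed.

Lemma sum_cube_prod_coord (R : comPzSemiRingType) (F : 'I_n -> bool -> R) i (G : bool -> R) :
  (forall j, j != i -> F j true + F j false = 1) ->
  \sum_(y : cube n) (\prod_j F j (y j)) * G (y i) = F i true * G true + F i false * G false.
Proof.
move=> F_stoch; pose H j c := if j == i then F j c * G c else F j c.
transitivity (\sum_(y : cube n) \prod_j H j (y j)).
  apply: eq_bigr => y _; rewrite (bigD1 i) //= [RHS](bigD1 i) //= /H eqxx mulrAC.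
  by congr (_ * _); apply: eq_bigr => j /negbTE ->.
rewrite sum_cube_prod (bigD1 i) //= /H eqxx big1 ?mulr1 // => j ji.
by rewrite (negbTE ji) F_stoch.
Qed.

End CubeSums.

Section ProductMeasures.
Variables (R : realType) (n : nat).
Implicit Types (mu : {ffun cube n -> R}) (i : 'I_n).

Definition prod_measure (p : 'I_n -> R) : {ffun cube n -> R} :=
  [ffun y : cube n => \prod_i bernoulli (p i) (y i)].

Lemma marg_sum mu i : marg mu i true + marg mu i false = \sum_x mu x.
Proof.
rewrite [RHS](bigID (fun x : cube n => x i)) /marg.
by congr (_ + _); apply: eq_bigl => x; rewrite ?eqb_id ?eqbF_neg.
Qed.

Lemma marg_bounds mu i b : is_prob mu -> 0 <= marg mu i b <= 1.
Proof.
case=> mu_ge0 mu_sum1; have marg_ge0 c : 0 <= marg mu i c by apply: sumr_ge0.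
have := marg_sum mu i; have := marg_ge0 true; have := marg_ge0 false.
by rewrite mu_sum1; case: b; lra.
Qed.

Lemma center_marg mu i : center mu i = marg mu i true - marg mu i false.
Proof.
rewrite /center /integ (bigID (fun x : cube n => x i)) /= /marg -sumrN.
congr (_ + _); apply: eq_big => x; rewrite ?eqb_id ?eqbF_neg //.
  by rewrite /spin => ->; rewrite mulr1.
by rewrite /spin => /negbTE ->; rewrite mulrN1.
Qed.

Lemma marg_center mu i : is_prob mu -> marg mu i true = (1 + center mu i) / 2.
Proof. by case=> _ mu_sum1; have := marg_sum mu i; rewrite center_marg mu_sum1; lra. Qed.

Lemma marg_prod_measure p i b : marg (prod_measure p) i b = bernoulli (p i) b.
Proof.
rewrite /marg big_mkcond /=.
transitivity (\sum_(y : cube n) (\prod_j bernoulli (p j) (y j)) * (y i == b)%:R).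
  by apply: eq_bigr => y _; rewrite ffunE; case: eqP; rewrite ?mulr1 ?mulr0.
rewrite (sum_cube_prod_coord (F := fun j => bernoulli (p j)) (fun c => (c == b)%:R)) => [|j _].
  by case: b; rewrite /= ?mulr1 ?mulr0 ?addr0 ?add0r.
exact: bernoulli_sum.
Qed.

Lemma prod_measure_is_product p : (forall i, 0 <= p i <= 1) -> is_product (prod_measure p).
Proof.
move=> p_bounds; split; last first.
  by move=> y; rewrite ffunE; apply: eq_bigr => i _; rewrite marg_prod_measure.
split=> [y|]; first by rewrite ffunE prodr_ge0 // => i _; apply: bernoulli_ge0.
under eq_bigr => y _ do rewrite ffunE.
by rewrite (sum_cube_prod (fun i => bernoulli (p i))) big1 // => i _; apply: bernoulli_sum.
Qed.

Lemma center_prod_measure p i : center (prod_measure p) i = 2 * p i - 1.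
Proof. by rewrite center_marg !marg_prod_measure /bernoulli; ring. Qed.

Lemma product_measureE xi : is_product xi -> xi = prod_measure (fun i => (1 + center xi i) / 2).
Proof.
move=> [xi_prob xi_prod]; apply/ffunP => y; rewrite xi_prod ffunE; apply: eq_bigr => i _.
rewrite -marg_center // /bernoulli; case: (y i) => //.
by case: xi_prob => _ xi_sum1; have := marg_sum xi i; rewrite xi_sum1; lra.
Qed.

End ProductMeasures.

Section ConditionalSpin.
Variables (R : realType) (n : nat) (nu : {ffun cube n -> R}).
Hypothesis nu_ge0 : forall x, 0 <= nu x.

Lemma gvec_setc y i b : gvec nu (setc y i b) i = gvec nu y i.
Proof. by rewrite /gvec !setc_setc. Qed.

(* [gvec nu z i] is the conditional expectation of [spin z i] given the other coordinates of z. *)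
Lemma sum_gvec_spin i (F : cube n -> R) : (forall z b, F (setc z i b) = F z) ->
  \sum_z nu z * F z * gvec nu z i = \sum_z nu z * F z * spin R z i.
Proof.
move=> F_setc; rewrite (sum_cube_pairs _ i) [RHS](sum_cube_pairs _ i).
apply: eq_bigr => z _; case: (z i) => //.
rewrite !F_setc !gvec_setc /spin !setc_at.
set a := nu (setc z i true); set b := nu (setc z i false).
suff mass_gvec : (a + b) * gvec nu z i = a - b.
  by transitivity (F z * ((a + b) * gvec nu z i)); [ring | rewrite mass_gvec; ring].
rewrite /gvec -/a -/b; case: eqP => [ab0|/eqP ab_neq0]; last by rewrite mulrC divfK.
have a_ge0 : 0 <= a := nu_ge0 _; have b_ge0 : 0 <= b := nu_ge0 _.
by rewrite mulr0; lra.
Qed.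

Lemma integ_gvec i : integ nu (fun y => gvec nu y i) = center nu i.
Proof.
have := sum_gvec_spin (i := i) (F := fun => 1) (fun _ _ => erefl).
by under eq_bigr do rewrite mulr1; under [in RHS]eq_bigr do rewrite mulr1.
Qed.

End ConditionalSpin.

Section SequentialCoupling.
Variables (R : realType) (n : nat) (nu : {ffun cube n -> R}) (p : 'I_n -> R).
Hypotheses (nu_prob : is_prob nu) (p_bounds : forall i, 0 <= p i <= 1).

Let nu_ge0 : forall x, 0 <= nu x := proj1 nu_prob.

Definition prefix (i : 'I_n) (x : cube n) : cube n := [ffun j : 'I_n => (j < i)%N && x j].

Definition prefix_mass i x b := \sum_(z | (prefix i z == prefix i x) && (z i == b)) nu z.

Definition kernel i x : bool -> R :=
  bit_kernel (prefix_mass i x true) (prefix_mass i x false) (p i) (x i).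

(* Given x, the coordinates of y are drawn independently, y_i from x_i by the
   optimal coupling of the conditional law of x_i given x_0, ..., x_(i-1) with
   [bernoulli (p i)]. *)
Definition coupling : {ffun cube n * cube n -> R} :=
  [ffun xy : cube n * cube n => nu xy.1 * \prod_i kernel i xy.1 (xy.2 i)].

Lemma prefix_setc i z b : prefix i (setc z i b) = prefix i z.
Proof. by apply/ffunP => j; rewrite !ffunE; case: eqP => // ->; rewrite ltnn. Qed.

Lemma prefix_mass_ge0 i x b : 0 <= prefix_mass i x b.
Proof. exact: sumr_ge0. Qed.

Lemma kernel_ge0 i x b : 0 <= kernel i x b.
Proof. by case/andP: (p_bounds i) => *; apply: bit_kernel_ge0; rewrite ?prefix_mass_ge0. Qed.

Lemma kernel_sum i x : kernel i x true + kernel i x false = 1.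
Proof. exact: bit_kernel_sum. Qed.

Lemma kernel_prefix (i k : 'I_n) z x :
  (i < k)%N -> prefix k z = prefix k x -> kernel i z = kernel i x.
Proof.
move=> ik /ffunP zx; have zx_i : z i = x i by move: (zx i); rewrite !ffunE ik.
have zx_prefix : prefix i z = prefix i x.
  apply/ffunP => j; move: (zx j); rewrite !ffunE.
  by case: (ltnP j i) => //= ji; rewrite (ltn_trans ji ik).
by rewrite /kernel /prefix_mass zx_i zx_prefix.
Qed.

Lemma sum_prefix_class i x (h : bool -> (bool -> R) -> R) :
  \sum_(z | prefix i z == prefix i x) nu z * h (z i) (kernel i z) =
  \sum_c prefix_mass i x c *
    h c (bit_kernel (prefix_mass i x true) (prefix_mass i x false) (p i) c).
Proof.
rewrite big_bool (bigID (fun z : cube n => z i)) /=.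
congr (_ + _); rewrite /prefix_mass mulr_suml; apply: eq_big => [z|z /andP[/eqP zx]].
- by rewrite eqb_id.
- by move=> zi; rewrite /kernel /prefix_mass zx zi.
- by rewrite eqbF_neg.
- by move/negbTE=> zi; rewrite /kernel /prefix_mass zx zi.
Qed.

Lemma sum_prefix_class_mass i x :
  \sum_(z | prefix i z == prefix i x) nu z = prefix_mass i x true + prefix_mass i x false.
Proof.
rewrite (bigID (fun z : cube n => z i)) /prefix_mass.
by congr (_ + _); apply: eq_bigl => z; rewrite ?eqb_id ?eqbF_neg.
Qed.

Lemma sum_prefix_class_gvec i x :
  \sum_(z | prefix i z == prefix i x) nu z * gvec nu z i =
  prefix_mass i x true - prefix_mass i x false.
Proof.
pose F z : R := (prefix i z == prefix i x)%:R.
have restrict G : \sum_z nu z * F z * G z = \sum_(z | prefix i z == prefix i x) nu z * G z.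
  rewrite [RHS]big_mkcond; apply: eq_bigr => z _.
  by rewrite /F; case: eqP; rewrite ?mulr1 ?mulr0 ?mul0r.
rewrite -restrict sum_gvec_spin // => [|z b]; last by rewrite /F prefix_setc.
rewrite restrict /spin (sum_prefix_class i x (fun c _ => if c then 1 else -1)) big_bool.
by rewrite mulr1 mulrN1.
Qed.

Lemma coupling_ge0 xy : 0 <= coupling xy.
Proof. by rewrite ffunE mulr_ge0 ?prodr_ge0 // => i _; apply: kernel_ge0. Qed.

Lemma sum_coupling_fst x : \sum_y coupling (x, y) = nu x.
Proof.
under eq_bigr do rewrite ffunE /=.
by rewrite -mulr_sumr (sum_cube_prod (kernel^~ x)) big1 ?mulr1 // => i _; apply: kernel_sum.
Qed.

(* Interpolates between [prod_measure p y] (k = 0) and the second marginal of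
   [coupling] at y (k = n). *)
Definition hybrid (y : cube n) (k : nat) := \sum_x nu x *
  ((\prod_(i : 'I_n | (i < k)%N) kernel i x (y i)) *
    \prod_(i : 'I_n | (k <= i)%N) bernoulli (p i) (y i)).

Lemma hybrid_step y k (kn : (k < n)%N) : hybrid y k.+1 = hybrid y k.
Proof.
pose ik := Ordinal kn.
have split_lt (F : 'I_n -> R) :
    \prod_(i : 'I_n | (i < k.+1)%N) F i = F ik * \prod_(i : 'I_n | (i < k)%N) F i.
  by rewrite (bigD1 ik) //=; congr (_ * _); apply: eq_bigl => i; rewrite -val_eqE /=; lia.
have split_ge (F : 'I_n -> R) :
    \prod_(i : 'I_n | (k <= i)%N) F i = F ik * \prod_(i : 'I_n | (k < i)%N) F i.
  by rewrite (bigD1 ik) //=; congr (_ * _); apply: eq_bigl => i; rewrite -val_eqE /=; lia.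
have kernel_lt z x : prefix ik z == prefix ik x ->
    \prod_(i : 'I_n | (i < k)%N) kernel i z (y i) =
    \prod_(i : 'I_n | (i < k)%N) kernel i x (y i).
  by move=> /eqP zx; apply: eq_bigr => i ik'; rewrite (kernel_prefix (k := ik) ik' zx).
apply: (eq_sum_by_classes nu_ge0 (k := prefix ik)) => x.
pose rest := (\prod_(i : 'I_n | (i < k)%N) kernel i x (y i)) *
  \prod_(i : 'I_n | (k < i)%N) bernoulli (p i) (y i).
transitivity (\sum_(z | prefix ik z == prefix ik x) nu z * kernel ik z (y ik) * rest).
  by apply: eq_bigr => z zx; rewrite split_lt (kernel_lt z x zx) /rest; ring.
transitivity (\sum_(z | prefix ik z == prefix ik x) nu z * bernoulli (p ik) (y ik) * rest).
  rewrite -!mulr_suml sum_prefix_class_mass; congr (_ * _).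
  rewrite (sum_prefix_class ik x (fun _ f => f (y ik))) big_bool /=.
  by case/andP: (p_bounds ik) => *; rewrite bit_kernel_mix ?prefix_mass_ge0.
by apply: eq_bigr => z zx; rewrite split_ge (kernel_lt z x zx) /rest; ring.
Qed.

Lemma sum_coupling_snd y : \sum_x coupling (x, y) = prod_measure p y.
Proof.
have hybrid0 : hybrid y 0 = prod_measure p y.
  transitivity (\sum_x nu x * prod_measure p y).
    by apply: eq_bigr => x _; rewrite big_pred0 // mul1r ffunE.
  by rewrite -mulr_suml (proj2 nu_prob) mul1r.
have hybridn : hybrid y n = \sum_x coupling (x, y).
  apply: eq_bigr => x _; rewrite ffunE [X in _ * (_ * X)]big_pred0 => [|i]; last first.
    by rewrite leqNgt ltn_ord.
  by rewrite mulr1; congr (_ * _); apply: eq_bigl => i; rewrite ltn_ord.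
have hybrid_const k : (k <= n)%N -> hybrid y k = hybrid y 0.
  by elim: k => // k IHk kn; rewrite hybrid_step // IHk // ltnW.
by rewrite -hybridn hybrid_const.
Qed.

Lemma coupling_is_coupling : is_coupling nu (prod_measure p) coupling.
Proof.
split; first exact: coupling_ge0.
by split; [exact: sum_coupling_fst | exact: sum_coupling_snd].
Qed.

Lemma hamming_sum (x y : cube n) : hamming R x y = \sum_i (x i != y i)%:R.
Proof.
rewrite /hamming -sum1_card natr_sum big_mkcond /=; apply: eq_bigr => i _.
by rewrite inE; case: (x i != y i).
Qed.

Lemma coupling_cost : \sum_(xy : cube n * cube n) coupling xy * hamming R xy.1 xy.2 =
  \sum_i \sum_x nu x * kernel i x (~~ x i).
Proof.
transitivity (\sum_x \sum_y coupling (x, y) * hamming R x y).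
  by rewrite pair_bigA; apply: eq_bigr => -[x y].
rewrite [RHS]exchange_big /=; apply: eq_bigr => x _.
transitivity (nu x * \sum_i \sum_(y : cube n) (\prod_j kernel j x (y j)) * (x i != y i)%:R).
  rewrite exchange_big mulr_sumr; apply: eq_bigr => y _.
  by rewrite ffunE hamming_sum /= !mulr_sumr; apply: eq_bigr => i _; rewrite mulrA.
rewrite mulr_sumr; apply: eq_bigr => i _; congr (_ * _).
rewrite (sum_cube_prod_coord (F := kernel^~ x) (fun c => (x i != c)%:R)) => [|j _].
  by case: (x i); rewrite /= ?mulr0 ?mulr1 ?addr0 ?add0r.
exact: kernel_sum.
Qed.

Lemma mismatch_le i : 2 * p i - 1 = integ nu (fun y => gvec nu y i) ->
  \sum_x nu x * kernel i x (~~ x i) <=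
  \sum_x nu x * (`|gvec nu x i - integ nu (fun y => gvec nu y i)| / 2).
Proof.
set m := integ nu _ => p_m; apply: (ler_sum_by_classes nu_ge0 (k := prefix i)) => x.
rewrite (sum_prefix_class i x (fun c f => f (~~ c))) big_bool /=.
case/andP: (p_bounds i) => p_ge0 p_le1; rewrite bit_kernel_cost ?prefix_mass_ge0 //.
have -> : prefix_mass i x true - p i * (prefix_mass i x true + prefix_mass i x false) =
    (\sum_(z | prefix i z == prefix i x) nu z * (gvec nu z i - m)) / 2.
  under eq_bigr do rewrite mulrBr; rewrite sumrB sum_prefix_class_gvec -mulr_suml.
  by rewrite sum_prefix_class_mass -p_m; lra.
under [leRHS]eq_bigr do rewrite mulrA; rewrite -mulr_suml normf_div normr_nat.
rewrite ler_wpM2r ?invr_ge0 ?ler0n //; apply: le_trans (ler_norm_sum _ _ _) _.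
by apply: ler_sum => z _; rewrite normrM ger0_norm.
Qed.

End SequentialCoupling.

Lemma W1_le_cost (R : realType) (n : nat) (nu1 nu2 : {ffun cube n -> R})
    (pi : {ffun cube n * cube n -> R}) :
  is_coupling nu1 nu2 pi -> W1 nu1 nu2 <= \sum_z pi z * hamming R z.1 z.2.
Proof.
move=> pi_coupling; apply: ge_inf; last by exists pi.
exists 0 => _ [pi' [[pi'_ge0 _] ->]].
by apply: sumr_ge0 => z _; rewrite mulr_ge0 ?ler0n.
Qed.

Lemma sum_mean_abs_dev_le (R : realType) (n : nat) (nu : {ffun cube n -> R}) : is_prob nu ->
  \sum_i \sum_x nu x * `|gvec nu x i - integ nu (fun y => gvec nu y i)| <=
  Num.sqrt (n%:R * \tr (Hmx nu)).
Proof.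
case=> nu_ge0 nu_sum1; apply: le_trans (sum_le_sqrt _) _.
rewrite ler_wsqrtr // ler_wpM2l // /mxtrace; apply: ler_sum => i _.
by rewrite mxE; apply: sqr_mean_abs_dev_le.
Qed.

Theorem proposition3p5 (R : realType) (n : nat) (nu : {ffun cube n -> R}) :
  is_prob nu ->
  let m := fun i => integ nu (fun y => gvec nu y i) in
  (* the point m equals the center of mass of nu *)
  (forall i, m i = center nu i) /\
  (* there is a product measure with center of mass m, and it is unique *)
  (exists xi, is_product xi /\ forall i, center xi i = m i) /\
  (forall xi xi', is_product xi -> (forall i, center xi i = m i) ->
     is_product xi' -> (forall i, center xi' i = m i) -> xi = xi') /\
  (* that product measure satisfies the W1 bound *)
  (forall xi, is_product xi -> (forall i, center xi i = m i) ->
     W1 nu xi <= Num.sqrt (n%:R * \tr (Hmx nu))).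
Proof.
move=> nu_prob m; have center_m i : m i = center nu i := integ_gvec (proj1 nu_prob) i.
pose p i := (1 + m i) / 2.
have p_bounds i : 0 <= p i <= 1 by rewrite /p center_m -marg_center // marg_bounds.
have p_m i : 2 * p i - 1 = m i by rewrite /p; lra.
have product_m xi : is_product xi -> (forall i, center xi i = m i) -> xi = prod_measure p.
  move=> xi_prod xi_m; rewrite (product_measureE xi_prod); apply/ffunP => y.
  by rewrite !ffunE; apply: eq_bigr => i _; rewrite xi_m.
split=> //; split.
  exists (prod_measure p); split; first exact: prod_measure_is_product.
  by move=> i; rewrite center_prod_measure.
split=> [xi xi' ? ? ? ?|xi xi_prod xi_m]; first by rewrite (product_m xi) // (product_m xi').
rewrite (product_m xi xi_prod xi_m).
apply: le_trans (W1_le_cost (coupling_is_coupling nu_prob p_bounds)) _.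
rewrite coupling_cost; apply: le_trans (sum_mean_abs_dev_le nu_prob); apply: ler_sum => i _.
apply: le_trans (mismatch_le nu_prob p_bounds (p_m i)) _; apply: ler_sum => x _.
by rewrite ler_wpM2l ?(proj1 nu_prob) // ler_pdivrMr // ler_peMr // ler1n.
Qed.
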